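(* Let $\mu>0$ and $0<\beta<1$. Let $g:\mathbb{C}\to\mathbb{R}$ be given by $g(x)=\frac{\mu+|x|^2}{2}$ for $|x|\ge\sqrt{\mu}$ and $g(x)=\sqrt{\mu}|x|$ for $|x|\le\sqrt{\mu}$. Suppose $z_0\in\partial g(x_0)$ and $|z_0|<\beta^2\sqrt{\mu}$. Then for all $x_1\in\mathbb{C}$ with $x_1\neq x_0$ and all $z_1\in\partial g(x_1)$, $$\mathrm{Re}\big((z_1-z_0)\overline{(x_1-x_0)}\big)>(1-\beta^2)|x_1-x_0|^2.$$
   Context: $\partial g$ is the convex subdifferential (with $\mathbb{C}$ regarded as $\mathbb{R}^2$ with inner product $\mathrm{Re}(z\bar w)$); explicitly $\partial g(x)=\{x\}$ if $|x|\ge\sqrt\mu$, $\partial g(x)=\{\sqrt{\mu}\,x/|x|\}$ if $0<|x|\le\sqrt\mu$, and $\partial g(0)=\sqrt{\mu}\,\mathbb{D}$, where $\mathbb{D}$ is the closed unit disc. (In the paper $\beta$ is the constant $\beta_N=\inf\{\|Ax\|_2/\|x\|_2:x\ne0,\mathrm{card}(x)\le N\}$ of a matrix $A$, assumed to satisfy $0<\beta_N<1$; only its value matters here.) *)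

From Stdlib Require Import Reals.
From Coquelicot Require Import Coquelicot.
Open Scope R_scope.

Definition gfun (mu : R) (x : C) : R :=
  if Rle_dec (sqrt mu) (Cmod x) then (mu + Cmod x ^ 2) / 2
  else sqrt mu * Cmod x.

(* Convex subdifferential on C viewed as R^2 with inner product Re(z * conj w). *)
Definition subdiff (g : C -> R) (x z : C) : Prop :=
  forall y : C, g x + Re (Cmult z (Cconj (Cminus y x))) <= g y.

(* A subgradient of g at x <> 0 has modulus at least sqrt mu, because g(x) >= sqrt mu |x| while
   g(0) = 0; so the smallness of z0 forces x0 = 0, and it suffices to bound Re(z1 conj x1) below
   by |x1| max(sqrt mu, |x1|).  Where |x1| >= sqrt mu, g touches its quadratic majorant
   (mu + |y|^2)/2 from below, so its only subgradient there is x1 itself, giving |x1|^2;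
   elsewhere, comparing with g(0) = 0 gives sqrt mu |x1|.  This lower bound dominates
   (1 - beta^2)|x1|^2 + beta^2 sqrt mu |x1|, whereas Re(z0 conj x1) < beta^2 sqrt mu |x1|. *)
From Stdlib Require Import Reals Lra Psatz.
From Coquelicot Require Import Coquelicot.
Open Scope R_scope.

Lemma Re_mul_Cconj_le (z w : C) : Re (Cmult z (Cconj w)) <= Cmod z * Cmod w.
Proof.
  pose proof (re_le_Cmod (Cmult z (Cconj w))) as Hre.
  rewrite Cmod_mult, Cmod_conj in Hre.
  pose proof (Rle_abs (Re (Cmult z (Cconj w)))).
  lra.
Qed.

Lemma Re_mul_Cconj_self (x : C) : Re (Cmult x (Cconj x)) = Cmod x ^ 2.
Proof. rewrite Cmod2_alt. destruct x; simpl. ring. Qed.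

Lemma subdiff_le_origin (g : C -> R) (x z : C) :
  subdiff g x z -> g x - g 0 <= Re (Cmult z (Cconj x)).
Proof.
  intros Hz. specialize (Hz 0).
  replace (Re (Cmult z (Cconj (Cminus 0 x)))) with (- Re (Cmult z (Cconj x))) in Hz
    by (destruct z, x; simpl; ring).
  lra.
Qed.

Lemma subdiff_majorant (g q : C -> R) (x z : C) :
  (forall y, g y <= q y) -> q x = g x -> subdiff g x z -> subdiff q x z.
Proof.
  intros Hgq Hx Hz y. rewrite Hx.
  specialize (Hz y). specialize (Hgq y). lra.
Qed.

(* Testing the subgradient inequality at y = z gives |z - x|^2 <= 0. *)
Lemma subdiff_half_sq (c : R) (x z : C) :
  subdiff (fun y => (c + Cmod y ^ 2) / 2) x z -> z = x.
Proof.
  intros Hz. specialize (Hz z). cbv beta in Hz.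
  rewrite !Cmod2_alt in Hz.
  destruct z as [a b], x as [u v]; simpl in Hz.
  assert (Hsq : (a - u) ^ 2 + (b - v) ^ 2 <= 0) by nra.
  pose proof (pow2_ge_0 (a - u)). pose proof (pow2_ge_0 (b - v)).
  assert (a - u = 0 /\ b - v = 0) as [Ha Hb]
    by (split; apply Rsqr_0_uniq; unfold Rsqr; nra).
  f_equal; lra.
Qed.

Lemma gfun_ge (mu : R) (x : C) : 0 <= mu -> sqrt mu * Cmod x <= gfun mu x.
Proof.
  intros Hmu. pose proof (sqrt_sqrt mu Hmu). unfold gfun.
  destruct (Rle_dec (sqrt mu) (Cmod x)); nra.
Qed.

Lemma gfun_le (mu : R) (x : C) : 0 <= mu -> gfun mu x <= (mu + Cmod x ^ 2) / 2.
Proof.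
  intros Hmu. pose proof (sqrt_sqrt mu Hmu). unfold gfun.
  destruct (Rle_dec (sqrt mu) (Cmod x)); nra.
Qed.

Lemma gfun_large (mu : R) (x : C) :
  sqrt mu <= Cmod x -> gfun mu x = (mu + Cmod x ^ 2) / 2.
Proof. intros Hx. unfold gfun. destruct (Rle_dec (sqrt mu) (Cmod x)); tauto. Qed.

Lemma gfun_0 (mu : R) : 0 <= mu -> gfun mu 0 = 0.
Proof.
  intros Hmu. unfold gfun. rewrite Cmod_0.
  destruct (Rle_dec (sqrt mu) 0) as [Hs|Hs]; [|lra].
  pose proof (sqrt_pos mu).
  rewrite (sqrt_eq_0 mu Hmu) by lra. lra.
Qed.

Lemma subdiff_gfun_large (mu : R) (x z : C) :
  0 <= mu -> sqrt mu <= Cmod x -> subdiff (gfun mu) x z -> z = x.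
Proof.
  intros Hmu Hx Hz.
  apply (subdiff_half_sq mu).
  apply (subdiff_majorant (gfun mu)); auto using gfun_le, eq_sym, gfun_large.
Qed.

Lemma subdiff_gfun_Re_ge_origin (mu : R) (x z : C) :
  0 <= mu -> subdiff (gfun mu) x z -> sqrt mu * Cmod x <= Re (Cmult z (Cconj x)).
Proof.
  intros Hmu Hz.
  pose proof (subdiff_le_origin _ _ _ Hz) as H0.
  rewrite gfun_0 in H0 by exact Hmu.
  pose proof (gfun_ge mu x Hmu). lra.
Qed.

Lemma subdiff_gfun_Cmod_ge (mu : R) (x z : C) :
  0 <= mu -> x <> 0 -> subdiff (gfun mu) x z -> sqrt mu <= Cmod z.
Proof.
  intros Hmu Hx Hz.
  apply Cmod_gt_0 in Hx.
  pose proof (subdiff_gfun_Re_ge_origin mu x z Hmu Hz).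
  pose proof (Re_mul_Cconj_le z x).
  apply (Rmult_le_reg_r (Cmod x)); lra.
Qed.

Lemma subdiff_gfun_Re_ge (mu : R) (x z : C) :
  0 <= mu -> subdiff (gfun mu) x z ->
  Cmod x * Rmax (sqrt mu) (Cmod x) <= Re (Cmult z (Cconj x)).
Proof.
  intros Hmu Hz.
  destruct (Rle_dec (sqrt mu) (Cmod x)) as [Hx|Hx].
  - rewrite Rmax_right by exact Hx.
    rewrite (subdiff_gfun_large mu x z Hmu Hx Hz), Re_mul_Cconj_self. lra.
  - rewrite Rmax_left by lra.
    rewrite Rmult_comm. exact (subdiff_gfun_Re_ge_origin mu x z Hmu Hz).
Qed.

Theorem lemma4p4 (mu beta : R) (Hmu : 0 < mu) (Hb0 : 0 < beta) (Hb1 : beta < 1)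
  (x0 z0 : C) (Hz0 : subdiff (gfun mu) x0 z0) (Hsmall : Cmod z0 < beta ^ 2 * sqrt mu) :
  forall (x1 z1 : C), x1 <> x0 -> subdiff (gfun mu) x1 z1 ->
    Re (Cmult (Cminus z1 z0) (Cconj (Cminus x1 x0))) > (1 - beta ^ 2) * Cmod (Cminus x1 x0) ^ 2.
Proof.
  intros x1 z1 Hne Hz1.
  pose proof (sqrt_lt_R0 mu Hmu) as Hs.
  assert (Hb2 : 0 < beta ^ 2 < 1) by (split; nra).
  assert (Hx0 : x0 = 0).
  { destruct (Ceq_dec x0 0) as [E|E]; [exact E|].
    pose proof (subdiff_gfun_Cmod_ge mu x0 z0 (Rlt_le _ _ Hmu) E Hz0). nra. }
  subst x0.
  replace (Cminus x1 0) with x1 by ring.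
  replace (Re (Cmult (Cminus z1 z0) (Cconj x1)))
    with (Re (Cmult z1 (Cconj x1)) - Re (Cmult z0 (Cconj x1))) by (destruct z1, z0, x1; simpl; ring).
  pose proof (proj1 (Cmod_gt_0 x1) Hne) as Hr.
  pose proof (subdiff_gfun_Re_ge mu x1 z1 (Rlt_le _ _ Hmu) Hz1) as Hz1_ge.
  pose proof (Re_mul_Cconj_le z0 x1) as Hz0_le.
  pose proof (Rmax_l (sqrt mu) (Cmod x1)).
  pose proof (Rmax_r (sqrt mu) (Cmod x1)).
  set (r := Cmod x1) in *.
  set (m := Rmax (sqrt mu) r) in *.
  assert (Hz0r : Cmod z0 * r < beta ^ 2 * sqrt mu * r) by nra.
  assert (0 <= (1 - beta ^ 2) * r * (m - r) + beta ^ 2 * r * (m - sqrt mu)).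
  { apply Rplus_le_le_0_compat; apply Rmult_le_pos; try apply Rmult_le_pos; lra. }
  lra.
Qed.
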